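(* Let $X,Y$ be compact Hausdorff spaces and $\pi\colon X\to Y$ a continuous surjection. Let $f\colon X\setminus I(f)\to X$ and $g\colon Y\setminus I(g)\to Y$ be partially continuous self-maps such that $I(f)\subseteq\pi^{-1}(I(g))$ and $\pi\circ f=g\circ\pi$ on $X\setminus\pi^{-1}(I(g))$. Then $h_{\mathrm{top}}(f)\ge h_{\mathrm{top}}(g)$.
   Context: A partially continuous self-map of a compact space $X$ is a continuous map $f\colon X\setminus I(f)\to X$ with $I(f)$ closed. Entropy: $\xi_0=X$, $\xi_n=\{x\in X\setminus I(f): f(x)\in\xi_{n-1}\}$; the canonical uniform structure has as entourages all neighbourhoods of the diagonal; for symmetric $\mathcal E$ and $x\in\xi_n$, $B^n_{\mathcal E}(x)=\{y\in\xi_n:(f^i(x),f^i(y))\in\mathcal E,0\le i\le n\}$; $S(n,\mathcal E)$ is the maximal size of $E\subset\xi_n$ with $x\notin B^n_{\mathcal E}(y)$ for distinct $x,y\in E$; $h_{\mathrm{top}}(f)=\sup_{\mathcal E}\limsup_n\frac1n\log S(n,\mathcal E)$. *)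

From HB Require Import structures.
From mathcomp Require Import all_boot all_order all_algebra.
From mathcomp Require Import all_classical all_reals all_analysis.
Set Implicit Arguments. Unset Strict Implicit. Unset Printing Implicit Defensive.
Import Order.TTheory GRing.Theory Num.Theory.
Local Open Scope classical_set_scope.
Local Open Scope ring_scope.

(* A partially continuous self-map of X: a total function f : X -> X together
   with a closed indeterminacy set I; only the restriction of f to X \ I
   matters, and it is required to be continuous there. *)
Definition partially_continuous (X : topologicalType) (I : set X) (f : X -> X) :=
  closed I /\ {within ~` I, continuous f}.

Fixpoint xi (X : Type) (I : set X) (f : X -> X) (n : nat) : set X :=
  match n with
  | 0 => setT
  | n.+1 => [set x | ~ I x /\ xi I f n (f x)]
  end.

(* Entourages of the canonical uniform structure: neighbourhoods of the
   diagonal in X x X. *)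
Definition entourage_diag (X : topologicalType) (E : set (X * X)) :=
  forall x : X, nbhs (x, x) E.

Definition symmetric_set (X : Type) (E : set (X * X)) :=
  forall x y, E (x, y) -> E (y, x).

Definition bowen_ball (X : Type) (I : set X) (f : X -> X) (n : nat)
  (E : set (X * X)) (x : X) : set X :=
  [set y | xi I f n y /\ forall i, (i <= n)%N -> E (iter i f x, iter i f y)].

Definition separated (X : eqType) (I : set X) (f : X -> X) (n : nat)
  (E : set (X * X)) (s : seq X) :=
  uniq s /\ (forall x, x \in s -> xi I f n x) /\
  (forall x y, x \in s -> y \in s -> x <> y -> ~ bowen_ball I f n E y x).

Definition S_sep (R : realType) (X : eqType) (I : set X) (f : X -> X) (n : nat)
  (E : set (X * X)) : \bar R :=
  ereal_sup [set ((size s)%:R)%:E | s in [set s | separated I f n E s]].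

Definition lnE (R : realType) (x : \bar R) : \bar R :=
  match x with
  | r%:E => if r == 0 then -oo%E else (ln r)%:E
  | +oo%E => +oo%E
  | -oo%E => -oo%E
  end.

Definition htop (R : realType) (X : topologicalType) (I : set X) (f : X -> X)
  : \bar R :=
  ereal_sup [set limn_esup (fun n => (((n%:R : R)^-1)%:E * lnE (S_sep R I f n E))%E)
            | E in [set E : set (X * X) | entourage_diag E /\ symmetric_set E]].

(* Choose a section [sec] of [pi]. A [g]-orbit segment starting at [pi x] that
   avoids [Ig] is the image of the [f]-orbit segment of [x], which therefore
   avoids [If]. Hence [sec] maps every [(n, E)]-separated set of [g] injectively
   onto an [(n, E')]-separated set of [f], where [E'] is the preimage of [E]
   under [pi \times pi], again a symmetric neighbourhood of the diagonal. So
   [S_g(n, E) <= S_f(n, E')] for all [n], and [h_top(g) <= h_top(f)]. *)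
From Pilot Require Import Defs.
From HB Require Import structures.
From mathcomp Require Import all_boot all_order all_algebra.
From mathcomp Require Import all_classical all_reals all_analysis.
Set Implicit Arguments. Unset Strict Implicit. Unset Printing Implicit Defensive.
Import Order.TTheory GRing.Theory Num.Theory.
Local Open Scope classical_set_scope.
Local Open Scope ereal_scope.

Lemma le_limn_esup (R : realType) (u v : (\bar R)^nat) :
  (forall n, u n <= v n) -> limn_esup u <= limn_esup v.
Proof.
move=> uv; apply: le_ereal_inf_tmp => _ [V FV <-].
apply: le_trans (ereal_inf_lbound _) _; first by exists V.
apply: ge_ereal_sup => _ [n Vn <-].
by apply: le_trans (uv n) _; apply: ereal_sup_ubound; exists n.
Qed.

Lemma le_lnE (R : realType) (x y : \bar R) : 0 <= x -> x <= y -> lnE x <= lnE y.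
Proof.
case: x => [r| |] //=; case: y => [s| |] //= r_ge0; last first.
  by move=> _; case: ifP; rewrite ?leey.
rewrite lee_fin => le_rs; have [_|r_neq0] := eqVneq r 0%R; first by rewrite leNye.
have r_gt0 : (0 < r)%R by rewrite lt_def r_neq0 -lee_fin.
have s_gt0 : (0 < s)%R by apply: lt_le_trans le_rs.
by rewrite gt_eqF // lee_fin ler_ln // posrE.
Qed.

Lemma S_sep_ge0 (R : realType) (X : eqType) (I : set X) (f : X -> X) n E :
  0 <= S_sep R I f n E.
Proof. by apply: le_ereal_sup_tmp; exists 0 => //; exists [::]. Qed.

Lemma le_htop (R : realType) (X Y : topologicalType)
    (If : set X) (f : X -> X) (Ig : set Y) (g : Y -> Y) :
  (forall E, entourage_diag E -> symmetric_set E ->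
    exists2 E', entourage_diag E' /\ symmetric_set E' &
      forall n, S_sep R Ig g n E <= S_sep R If f n E') ->
  htop R Ig g <= htop R If f.
Proof.
move=> SgSf; apply: ge_ereal_sup => _ [E [entE symE] <-].
have [E' E'_ent le_S] := SgSf E entE symE.
apply: le_trans (ereal_sup_ubound _); last by exists E'.
apply: le_limn_esup => n; apply: lee_wpmul2l; first by rewrite lee_fin invr_ge0.
exact/le_lnE/le_S/S_sep_ge0.
Qed.

Definition preimage_pair (X Y : Type) (pi : X -> Y) (E : set (Y * Y)) :
  set (X * X) := [set p | E (pi p.1, pi p.2)].

Lemma entourage_diag_preimage_pair (X Y : topologicalType) (pi : X -> Y)
    (E : set (Y * Y)) :
  continuous pi -> entourage_diag E -> entourage_diag (preimage_pair pi E).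
Proof.
move=> pi_cont entE x.
have pi2_cvg : (fun p : X * X => (pi p.1, pi p.2)) @ (x, x) --> (pi x, pi x).
  by apply: cvg_pair; [apply: (cvg_comp fst) | apply: (cvg_comp snd)];
    [exact: cvg_fst | exact: pi_cont | exact: cvg_snd | exact: pi_cont].
exact: pi2_cvg (entE (pi x)).
Qed.

Lemma symmetric_preimage_pair (X Y : Type) (pi : X -> Y) (E : set (Y * Y)) :
  symmetric_set E -> symmetric_set (preimage_pair pi E).
Proof. by move=> symE x y; apply: symE. Qed.

Section Semiconjugacy.
Variables (X Y : eqType) (pi : X -> Y) (If : set X) (f : X -> X).
Variables (Ig : set Y) (g : Y -> Y).
Hypothesis If_sub : If `<=` pi @^-1` Ig.
Hypothesis pi_f : forall x, ~ Ig (pi x) -> pi (f x) = g (pi x).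

Lemma xi_semiconj n x : xi Ig g n (pi x) -> xi If f n x.
Proof.
elim: n x => [//|n IHn] x /= [Ig_pix xi_gpix]; split; first by move/If_sub.
by apply: IHn; rewrite pi_f.
Qed.

Lemma iter_semiconj n x i : xi Ig g n (pi x) -> (i <= n)%N ->
  pi (iter i f x) = iter i g (pi x).
Proof.
elim: i n x => [//|i IHi] [//|n] x [Ig_pix xi_gpix] le_in.
by rewrite !iterSr (IHi n) ?pi_f.
Qed.

Variables (sec : Y -> X) (secK : cancel sec pi).

Lemma xi_sec n y : xi Ig g n y -> xi If f n (sec y).
Proof. by move=> xi_y; apply: xi_semiconj; rewrite secK. Qed.

Lemma bowen_ball_sec n E y z : xi Ig g n y ->
  bowen_ball If f n (preimage_pair pi E) (sec y) (sec z) ->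
  xi Ig g n z -> bowen_ball Ig g n E y z.
Proof.
move=> xi_y [_ near_yz] xi_z; split=> // i le_in.
have := near_yz i le_in; rewrite /preimage_pair /=.
by rewrite !(@iter_semiconj n) ?secK // xi_sec.
Qed.

Lemma separated_map_sec n E s : Defs.separated Ig g n E s ->
  Defs.separated If f n (preimage_pair pi E) (map sec s).
Proof.
move=> [uniq_s [xi_s sep_s]]; split; first by rewrite (map_inj_uniq (can_inj secK)).
split=> [_ /mapP[y ys ->]|_ _ /mapP[y ys ->] /mapP[z zs ->] neq_yz ball_zy].
  exact/xi_sec/xi_s.
apply: (sep_s y z ys zs); first by move=> eq_yz; apply: neq_yz; rewrite eq_yz.
exact: bowen_ball_sec (xi_s z zs) ball_zy (xi_s y ys).
Qed.

Lemma S_sep_semiconj (R : realType) n E :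
  S_sep R Ig g n E <= S_sep R If f n (preimage_pair pi E).
Proof.
apply: ereal_sup_le => _ [s sep_s <-]; exists (map sec s); last by rewrite size_map.
exact: separated_map_sec.
Qed.

End Semiconjugacy.

Theorem corollary1p17 (R : realType) (X Y : topologicalType)
  (pi : X -> Y) (If : set X) (f : X -> X) (Ig : set Y) (g : Y -> Y) :
  compact [set: X] -> hausdorff_space X ->
  compact [set: Y] -> hausdorff_space Y ->
  continuous pi -> (forall y : Y, exists x : X, pi x = y) ->
  partially_continuous If f -> partially_continuous Ig g ->
  If `<=` pi @^-1` Ig ->
  (forall x, ~ Ig (pi x) -> pi (f x) = g (pi x)) ->
  htop R Ig g <= htop R If f.
Proof.
move=> _ _ _ _ pi_cont pi_surj _ _ If_sub pi_f.
have [sec secK] := choice pi_surj.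
apply: le_htop => E entE symE; eexists; last first.
  by move=> n; exact (S_sep_semiconj If_sub pi_f secK R n E).
split; [exact: entourage_diag_preimage_pair | exact: symmetric_preimage_pair].
Qed.
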